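(* Assume the setup of the context with $F$ formally real, and let $V_\lambda$ be a simple $H$-module of type $\lambda\in\Lambda$. Then: (a) there is a symmetric bilinear form $\langle\cdot,\cdot\rangle_\lambda:V_\lambda\times V_\lambda\to K$ which is $H$-invariant, i.e. $\langle h^\ast v,w\rangle_\lambda=\langle v,hw\rangle_\lambda$ for all $h\in H$, $v,w\in V_\lambda$, and positive definite in the sense that $\langle w,w\rangle_\lambda$ is always a sum of squares in $K$ which is $0$ only for $w=0$ (in particular it is nondegenerate); (b) for this form and every $w\in V_\lambda\setminus\{0\}$ one has $\nu(\langle w,w\rangle_\lambda)\in2\Gamma$; (c) $a_\lambda\in\Gamma$, and there exists a balanced matrix representation of type $\lambda$.
   Context: Setup: $\Gamma$ a totally ordered abelian group; $K$ a field with surjective valuation $\nu:K\to\Gamma\cup\{\infty\}$, valuation ring $\mathcal{O}$, maximal ideal $\mathfrak{m}$, residue field $F=\mathcal{O}/\mathfrak{m}$, assumed formally real ($-1$ not a sum of squares); $\nu$ of a matrix is the minimum over entries. $H$ is a finite-dimensional split semisimple $K$-algebra, symmetric with trace form $\tau$; $\Lambda$ indexes simple modules, $\chi_\lambda$ characters, Schur elements $c_\lambda$ defined by $\tau=\sum_\lambda c_\lambda^{-1}\chi_\lambda$. $\ast$ is a $K$-linear involutive antiautomorphism of $H$ and there is a $\ast$-symmetric basis, i.e. a basis $B$ with $B^\ast=B$ and $\tau(bc^\ast)=\delta_{bc}$. $a_\lambda:=-\tfrac12\nu(c_\lambda)$. An irreducible matrix representation $\rho$ of type $\lambda$ is balanced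 if $a_\lambda\in\Gamma$ and $\nu(\rho(b))\ge -a_\lambda$ for all $b$ in every $\ast$-symmetric basis. *)

From HB Require Import structures.
From mathcomp Require Import all_boot all_order all_algebra all_field.
Set Implicit Arguments. Unset Strict Implicit. Unset Printing Implicit Defensive.
Import Order.TTheory GRing.Theory.
Local Open Scope ring_scope.

Definition ordered_abelian_group (G : zmodType) (le : rel G) : Prop :=
  [/\ reflexive le, antisymmetric le, transitive le, total le
    & forall x y z : G, le x y -> le (x + z) (y + z)].

(* Γ ∪ {∞} is modelled as option Γ, with None = ∞. *)
Definition vle (G : zmodType) (le : rel G) (a b : option G) : bool :=
  match a, b with
  | _, None => true
  | None, Some _ => false
  | Some x, Some y => le x y
  end.

Definition vadd (G : zmodType) (a b : option G) : option G :=
  match a, b with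
  | Some x, Some y => Some (x + y)
  | _, _ => None
  end.

Definition surj_valuation (K : fieldType) (G : zmodType) (le : rel G)
    (nu : K -> option G) : Prop :=
  [/\ forall x, nu x = None <-> x = 0,
      forall x y, nu (x * y) = vadd (nu x) (nu y),
      forall x y, vle le (nu x) (nu (x + y)) || vle le (nu y) (nu (x + y))
    & forall g : G, exists x, nu x = Some g].

Definition in_valring (K : fieldType) (G : zmodType) (le : rel G)
    (nu : K -> option G) (x : K) : bool := vle le (Some 0) (nu x).
Definition in_maxideal (K : fieldType) (G : zmodType) (le : rel G)
    (nu : K -> option G) (x : K) : bool :=
  vle le (Some 0) (nu x) && (nu x != Some 0).

(* residue field F = O/m formally real: -1 is not a sum of squares in O/m,
   i.e. there are no y_1..y_n in O with -1 - sum y_i^2 in m. *)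
Definition residue_formally_real (K : fieldType) (G : zmodType) (le : rel G)
    (nu : K -> option G) : Prop :=
  ~ exists s : seq K, all (in_valring le nu) s /\
      in_maxideal le nu (- 1 - \sum_(y <- s) y ^+ 2).

Definition sum_of_squares (K : fieldType) (x : K) : Prop :=
  exists s : seq K, x = \sum_(y <- s) y ^+ 2.

Definition is_mx_repr (K : fieldType) (H : falgType K) (n : nat)
    (rho : H -> 'M[K]_n) : Prop :=
  [/\ forall (a : K) (x y : H), rho (a *: x + y) = a *: rho x + rho y,
      rho 1 = 1%:M
    & forall x y : H, rho (x * y) = rho x *m rho y].

Definition mx_repr_equiv (K : fieldType) (H : falgType K) (n : nat)
    (rho1 rho2 : H -> 'M[K]_n) : Prop :=
  exists2 P : 'M[K]_n, P \in unitmx & forall h, P *m rho1 h = rho2 h *m P.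

(* H is split semisimple, with the simple modules indexed by Lambda given
   (in matrix form) by rho lambda : H -> M_{d lambda}(K): the map
   h |-> (rho lambda h)_lambda is a K-algebra isomorphism
   H ~= prod_lambda M_{d lambda}(K) (Wedderburn), each d lambda > 0. *)
Definition split_semisimple_data (K : fieldType) (H : falgType K)
    (Lambda : finType) (d : Lambda -> nat)
    (rho : forall l : Lambda, H -> 'M[K]_(d l)) : Prop :=
  [/\ forall l, (0 < d l)%N,
      forall l, is_mx_repr (rho l),
      forall x : H, (forall l, rho l x = 0) -> x = 0
    & forall M : forall l : Lambda, 'M[K]_(d l),
        exists x : H, forall l, rho l x = M l].

Definition chi (K : fieldType) (H : falgType K) (Lambda : finType)
    (d : Lambda -> nat) (rho : forall l : Lambda, H -> 'M[K]_(d l))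
    (l : Lambda) (h : H) : K := \tr (rho l h).

Definition symmetrizing_form (K : fieldType) (H : falgType K) (tau : H -> K)
    : Prop :=
  [/\ forall (a : K) (x y : H), tau (a *: x + y) = a * tau x + tau y,
      forall x y : H, tau (x * y) = tau (y * x)
    & forall x : H, (forall y, tau (x * y) = 0) -> x = 0].

Definition linear_involutive_antiaut (K : fieldType) (H : falgType K)
    (star : H -> H) : Prop :=
  [/\ forall (a : K) (x y : H), star (a *: x + y) = a *: star x + star y,
      forall x y : H, star (x * y) = star y * star x
    & forall x : H, star (star x) = x].

Definition star_symmetric_basis (K : fieldType) (H : falgType K)
    (tau : H -> K) (star : H -> H) (B : seq H) : Prop :=
  [/\ basis_of fullv B,
      map star B =i B
    & forall b c, b \in B -> c \in B -> tau (b * star c) = (b == c)%:R].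

Definition mx_val_ge (K : fieldType) (G : zmodType) (le : rel G)
    (nu : K -> option G) (m n : nat) (M : 'M[K]_(m, n)) (g : G) : Prop :=
  forall i j, vle le (Some g) (nu (M i j)).

Definition balanced (K : fieldType) (G : zmodType) (le : rel G)
    (nu : K -> option G) (H : falgType K) (tau : H -> K) (star : H -> H)
    (n : nat) (rho' : H -> 'M[K]_n) (a : G) : Prop :=
  forall B : seq H, star_symmetric_basis tau star B ->
    forall b, b \in B -> mx_val_ge le nu (rho' b) (- a).

(* Let B be a *-symmetric basis and s a representation of type l.  The form
   <v, w> = sum_(b in B) (s b v)^T (s b w) is visibly a sum of squares, and it is
   H-invariant because B and star B are dual bases for tau, which gives
   sum_b s (b * star h) (x) s b = sum_b s b (x) s (b * h).
   Over a valued field with formally real residue field, a sum of squares with a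
   nonzero term has twice the least valuation of its terms: divided by that term
   it is 1 plus a sum of squares in O, hence a unit of O.  This gives definiteness
   and the evenness of nu <w, w>.
   Diagonalizing the form and rescaling the orthogonal basis so that every
   <e_i, e_i> has valuation 0 gives an equivalent representation r in which
   invariance reads r (star b) j i * <e_j, e_j> = <e_i, e_i> * r b i j.  Schur
   orthogonality sum_b r b i j * r (star b) j i = c_l then shows that
   nu (sum_b (r b i j)^2) = nu c_l for every *-symmetric basis, so nu c_l = -2 a_l
   is even and every r b i j has valuation at least -a_l. *)

From HB Require Import structures.
From mathcomp Require Import all_boot all_order all_algebra all_field.
Import Order.TTheory GRing.Theory.
Local Open Scope ring_scope.

Set Implicit Arguments.
Unset Strict Implicit.
Unset Printing Implicit Defensive.

Section OrderedGroup.
Variables (G : zmodType) (le : rel G).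
Hypothesis hG : ordered_abelian_group le.

Lemma double_inj (g h : G) : g + g = h + h -> g = h.
Proof.
case: hG => _ anti _ total monoD.
have key x y : x + x = y + y -> le x y -> x = y.
  move=> Exy lexy; apply: (addIr x); apply: anti; apply/andP; split.
    exact: monoD.
  by rewrite Exy addrC [y + y]addrC monoD.
move=> E; case/orP: (total g h) => ?; first exact: key.
by symmetry; apply: key.
Qed.

Lemma vle_refl a : vle le a a.
Proof. by case: a => //= x; case: hG => refl *; apply: refl. Qed.

Lemma vle_trans a b e : vle le a b -> vle le b e -> vle le a e.
Proof.
case: hG => _ _ tr _ _.
by case: a => [x|]; case: b => [y|]; case: e => [z|] //=; apply: tr.
Qed.

Lemma vle_total a b : vle le a b || vle le b a.
Proof.
by case: a b => [x|] [y|] //=; rewrite ?orbT //; case: hG => _ _ _ total _; apply: total.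
Qed.

Lemma le0D (g h : G) : le 0 g -> le 0 h -> le 0 (g + h).
Proof.
case: hG => _ _ tr _ monoD g0 h0.
by apply: tr h0 _; rewrite -{1}[h]add0r monoD.
Qed.

End OrderedGroup.

Section Valuation.
Variables (G : zmodType) (le : rel G) (K : fieldType) (nu : K -> option G).
Hypotheses (hG : ordered_abelian_group le) (hnu : surj_valuation le nu).

Lemma nu_eqNone x : nu x = None <-> x = 0. Proof. by case: hnu. Qed.

Lemma nu0 : nu 0 = None. Proof. exact/nu_eqNone. Qed.

Lemma nuM x y : nu (x * y) = vadd (nu x) (nu y). Proof. by case: hnu. Qed.

Lemma nu_surj g : exists x, nu x = Some g. Proof. by case: hnu. Qed.

Lemma nu_Some x : x != 0 -> exists g, nu x = Some g.
Proof.
by case E: (nu x) => [g|] x0; [exists g | move/nu_eqNone: E x0 => ->; rewrite eqxx].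
Qed.

Lemma vle_None_nu x : vle le None (nu x) -> x = 0.
Proof. by case E: (nu x) => // _; apply/nu_eqNone. Qed.

Lemma nu1 : nu 1 = Some 0.
Proof.
have [g E] := nu_Some (oner_neq0 K).
rewrite E; have := nuM 1 1; rewrite mulr1 E => -[].
by rewrite -{1}[g]addr0 => /addrI ->.
Qed.

Lemma nuN1 : nu (-1) = Some 0.
Proof.
have [g E] : exists g, nu (-1) = Some g by apply: nu_Some; rewrite oppr_eq0 oner_eq0.
have := nuM (-1) (-1); rewrite mulrNN mulr1 nu1 E => -[gg0].
by congr Some; apply: (double_inj hG); rewrite addr0 -gg0.
Qed.

Lemma nuN x : nu (- x) = nu x.
Proof. by rewrite -mulN1r nuM nuN1; case: (nu x) => //= g; rewrite add0r. Qed.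

Lemma nuV x g : nu x = Some g -> nu x^-1 = Some (- g).
Proof.
move=> E; have x0 : x != 0 by apply: contraPneq E => ->; rewrite nu0.
have [h Eh] := nu_Some (invr_neq0 x0).
have := nuM x x^-1; rewrite mulfV // nu1 E Eh => -[] gh.
by congr Some; apply: (addrI g); rewrite subrr.
Qed.

Lemma nu_sum_ge (I : eqType) (r : seq I) (F : I -> K) (g : G) :
  (forall i, i \in r -> vle le (Some g) (nu (F i))) ->
  vle le (Some g) (nu (\sum_(i <- r) F i)).
Proof.
case: hnu => _ _ ultra _; elim: r => [|i r IH] Fge; first by rewrite big_nil nu0.
have Fi : vle le (Some g) (nu (F i)) by apply: Fge; rewrite mem_head.
have Fr : vle le (Some g) (nu (\sum_(j <- r) F j)).
  by apply: IH => j jr; apply: Fge; rewrite inE jr orbT.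
rewrite big_cons; case/orP: (ultra (F i) (\sum_(j <- r) F j)) => h.
  exact: (vle_trans hG Fi h).
exact: (vle_trans hG Fr h).
Qed.

Lemma in_valringM x y :
  in_valring le nu x -> in_valring le nu y -> in_valring le nu (x * y).
Proof. by rewrite /in_valring nuM; case: (nu x) (nu y) => [a|] [b|] //=; apply: le0D. Qed.

Section FormallyReal.
Hypothesis hF : residue_formally_real le nu.

Lemma nu_1_add_sum_sqr (s : seq K) : all (in_valring le nu) s ->
  nu (1 + \sum_(y <- s) y ^+ 2) = Some 0.
Proof.
move=> sO; have tO : in_valring le nu (1 + \sum_(y <- s) y ^+ 2).
  have := @nu_sum_ge _ (1 :: s) (fun y => y ^+ 2) 0; rewrite big_cons expr1n; apply.
  move=> y /predU1P[->|/(allP sO) yO]; last by rewrite expr2; exact: in_valringM.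
  by rewrite expr1n nu1; apply: (vle_refl hG).
have [//|tm] := eqVneq (nu (1 + \sum_(y <- s) y ^+ 2)) (Some 0).
by case: hF; exists s; rewrite /in_maxideal -opprD nuN; move: tO; rewrite /in_valring => ->.
Qed.

Lemma exists_min_nu (s : seq K) : s != [::] ->
  exists2 m, m \in s & forall y, y \in s -> vle le (nu m) (nu y).
Proof.
elim: s => // x [|x' s] IH _.
  by exists x => [|y]; rewrite ?mem_head // inE => /eqP->; apply: (vle_refl hG).
have [m ms minm] := IH isT.
case/orP: (vle_total hG (nu x) (nu m)) => xm.
  exists x => [|y]; rewrite ?mem_head // inE => /predU1P[->|ys].
    exact: (vle_refl hG).
  exact: (vle_trans hG xm (minm y ys)).
exists m => [|y]; first by rewrite inE ms orbT.
by rewrite inE => /predU1P[->|]; [exact: xm | exact: minm].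
Qed.

Lemma nu_sum_sqr_min (s : seq K) m : m \in s -> m != 0 ->
    (forall y, y \in s -> vle le (nu m) (nu y)) ->
  nu (\sum_(y <- s) y ^+ 2) = vadd (nu m) (nu m).
Proof.
move=> ms m0 minm; have [g Eg] := nu_Some m0.
have divO y : y \in s -> in_valring le nu (y / m).
  move=> ys; rewrite /in_valring nuM (nuV Eg).
  move: (minm y ys); rewrite Eg; case: (nu y) => //= h gh.
  by rewrite -(subrr g); case: hG => _ _ _ _; apply.
have -> : \sum_(y <- s) y ^+ 2 = m ^+ 2 * (1 + \sum_(y <- map (fun y => y / m) (rem m s)) y ^+ 2).
  rewrite (perm_big _ (perm_to_rem ms)) big_cons big_map mulrDr mulr1 big_distrr /=.
  by congr (_ + _); apply: eq_bigr => y _; rewrite expr_div_n mulrCA mulfV ?mulr1 ?expf_neq0.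
rewrite nuM nu_1_add_sum_sqr; last by apply/allP => _ /mapP[y /mem_rem ys ->]; apply: divO.
by rewrite expr2 nuM Eg /= addr0.
Qed.

Lemma sum_sqr_eq0 (s : seq K) : \sum_(y <- s) y ^+ 2 = 0 -> forall y, y \in s -> y = 0.
Proof.
move=> S0 y ys; have sn : s != [::] by case: s ys {S0}.
have [m ms minm] := exists_min_nu sn.
have [m0|m0] := eqVneq m 0; first by apply: vle_None_nu; rewrite -nu0 -m0 minm.
by have [g Eg] := nu_Some m0; move: (nu_sum_sqr_min ms m0 minm); rewrite S0 nu0 Eg.
Qed.

Lemma nu_sum_sqr (s : seq K) : \sum_(y <- s) y ^+ 2 != 0 ->
  exists g, nu (\sum_(y <- s) y ^+ 2) = Some (g + g) /\
            forall y, y \in s -> vle le (Some g) (nu y).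
Proof.
move=> S0; have sn : s != [::] by apply: contraNneq S0 => ->; rewrite big_nil.
have [m ms minm] := exists_min_nu sn.
have m0 : m != 0.
  apply: contraNneq S0 => m0; rewrite big1_seq // => y /andP[_ ys].
  by rewrite (@vle_None_nu y) ?expr0n // -nu0 -m0 minm.
have [g Eg] := nu_Some m0.
by exists g; rewrite (nu_sum_sqr_min ms m0 minm) Eg; split=> // y /minm; rewrite Eg.
Qed.

End FormallyReal.
End Valuation.

Section SymmetricAlgebra.
Variables (K : fieldType) (H : falgType K) (tau : H -> K) (star : H -> H) (B : seq H).
Hypotheses (htau : symmetrizing_form tau) (hstar : linear_involutive_antiaut star).
Hypothesis hB : star_symmetric_basis tau star B.

Let tau_linear : linear_for *%R tau. Proof. by case: htau. Qed.
#[local] HB.instance Definition _ := GRing.isLinear.Build K H K *%R tau tau_linear.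
Let star_linear : linear star. Proof. by case: hstar. Qed.
#[local] HB.instance Definition _ := GRing.isLinear.Build K H H *:%R star star_linear.

Lemma tauC x y : tau (x * y) = tau (y * x). Proof. by case: htau. Qed.

Lemma starK : involutive star. Proof. by case: hstar. Qed.

Lemma starM x y : star (x * y) = star y * star x. Proof. by case: hstar. Qed.

Lemma star1 : star 1 = 1.
Proof. by have := starM (star 1) 1; rewrite mulr1 starK mulr1 => <-. Qed.

Lemma tau_basis b c : b \in B -> c \in B -> tau (b * star c) = (b == c)%:R.
Proof. by case: hB => _ _; apply. Qed.

Lemma star_basis b : b \in B -> star b \in B.
Proof. by case: hB => _ EB _ bB; rewrite -EB map_f. Qed.

Lemma basis_uniq : uniq B. Proof. by case: hB => /andP[_ /free_uniq]. Qed.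

Lemma sum_basis_star (V : nmodType) (F : H -> V) :
  \sum_(b <- B) F (star b) = \sum_(b <- B) F b.
Proof.
rewrite -(big_map star xpredT); apply: perm_big; case: hB => _ EB _.
by apply: uniq_perm EB; rewrite ?map_inj_uniq ?basis_uniq //; apply: can_inj starK.
Qed.

Lemma sum_basis_delta (F : H -> K) c : c \in B -> \sum_(b <- B) F b * (b == c)%:R = F c.
Proof.
move=> cB; rewrite (bigD1_seq c) ?basis_uniq //= eqxx mulr1 big1 ?addr0 // => b /negPf->.
by rewrite mulr0.
Qed.

Section LinearFormOnBasis.
Variable phi : H -> K.
Hypothesis phi_linear : linear_for *%R phi.
#[local] HB.instance Definition _ := GRing.isLinear.Build K H K *%R phi phi_linear.

Lemma linear_form_eq0 : (forall b, b \in B -> phi b = 0) -> forall x, phi x = 0.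
Proof.
move=> phiB x; have xB : x \in <<in_tuple B>>%VS.
  by case: hB => /andP[/eqP-> _] _ _; apply: memvf.
rewrite (coord_span xB) linear_sum big1 // => i _.
by rewrite linearZ /= phiB ?mulr0 // mem_nth.
Qed.

End LinearFormOnBasis.

Lemma tau_mull_linear y : linear_for *%R (fun z => tau (y * z)).
Proof. by move=> a u v; rewrite /= mulrDr -scalerAr linearP. Qed.

Lemma basis_expansion x : x = \sum_(b <- B) tau (x * star b) *: b.
Proof.
apply/eqP; rewrite -subr_eq0; apply/eqP; case: htau => _ _; apply.
apply: (linear_form_eq0 (tau_mull_linear _)) => c cB /=.
rewrite mulrBl linearB /= mulr_suml linear_sum /=.
rewrite (eq_big_seq (fun b => tau (x * star b) * (b == star c)%:R)) => [|b bB].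
  by rewrite sum_basis_delta ?star_basis // starK subrr.
by rewrite -scalerAl linearZ /= -{1}[c]starK (tau_basis bB (star_basis cB)).
Qed.

Lemma basis_expansion_star x : x = \sum_(b <- B) tau (x * b) *: star b.
Proof.
rewrite {1}(basis_expansion x) -(sum_basis_star (fun b => tau (x * star b) *: b)).
by apply: eq_bigr => b _; rewrite starK.
Qed.

Lemma tau_star x : tau (star x) = tau x.
Proof.
apply/eqP; rewrite -subr_eq0; apply/eqP; move: x.
apply: (@linear_form_eq0 (fun x => tau (star x) - tau x)).
  by move=> a u v; rewrite /= !linearP /= mulrBr addrACA opprD.
move=> b bB; apply/eqP; rewrite subr_eq0; apply/eqP.
rewrite -[in RHS](mulr1 b) -star1 (basis_expansion 1) !linear_sum mulr_sumr linear_sum /=.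
rewrite (eq_big_seq (fun c => tau (star c) * (c == b)%:R)) => [|c cB].
  by rewrite sum_basis_delta.
by rewrite mul1r linearZ -scalerAr linearZ /= tau_basis // eq_sym.
Qed.

Section BasisSums.
Variables phi psi : H -> K.
Hypotheses (phi_linear : linear_for *%R phi) (psi_linear : linear_for *%R psi).
#[local] HB.instance Definition _ := GRing.isLinear.Build K H K *%R phi phi_linear.
#[local] HB.instance Definition _ := GRing.isLinear.Build K H K *%R psi psi_linear.

Lemma sum_basis_mul_star h :
  \sum_(b <- B) phi (b * star h) * psi b = \sum_(b <- B) phi b * psi (b * h).
Proof.
have phiE y : phi y = \sum_(c <- B) tau (y * star c) * phi c.
  by rewrite {1}(basis_expansion y) linear_sum; apply: eq_bigr => c _; rewrite linearZ.
have psiE y : psi y = \sum_(c <- B) tau (y * star c) * psi c.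
  by rewrite {1}(basis_expansion y) linear_sum; apply: eq_bigr => c _; rewrite linearZ.
transitivity (\sum_(b <- B) \sum_(c <- B) tau (c * h * star b) * phi c * psi b).
  apply: eq_bigr => b _; rewrite phiE mulr_suml; apply: eq_bigr => c _.
  by rewrite -[in RHS]tau_star !starM starK mulrA.
rewrite exchange_big; apply: eq_bigr => b _; rewrite psiE mulr_sumr.
by apply: eq_bigr => c _; rewrite mulrCA mulrA.
Qed.

Lemma sum_basis_dual e : \sum_(b <- B) tau (b * e) * psi (star b) = psi e.
Proof.
rewrite [in RHS](basis_expansion_star e) linear_sum.
by apply: eq_bigr => b _; rewrite linearZ tauC.
Qed.

End BasisSums.
End SymmetricAlgebra.

Section MatrixForms.
Variable K : fieldType.

Definition mxform n (M : 'M[K]_n) (v w : 'cV[K]_n) : K := (v^T *m M *m w) 0 0.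

Definition anisotropic n (M : 'M[K]_n) := forall v, v != 0 -> mxform M v v != 0.

Lemma mxform_linearl n (M : 'M[K]_n) a u v w :
  mxform M (a *: u + v) w = a * mxform M u w + mxform M v w.
Proof. by rewrite /mxform linearP /= !mulmxDl -!scalemxAl !mxE. Qed.

Lemma mxform_sym n (M : 'M[K]_n) : M^T = M -> forall v w, mxform M v w = mxform M w v.
Proof.
move=> symM v w; rewrite /mxform -[in RHS]symM -[in RHS](trmxK v).
by rewrite -!trmx_mul [RHS]mxE mulmxA.
Qed.

Lemma mxform_linearr n (M : 'M[K]_n) : M^T = M -> forall a u v w,
  mxform M u (a *: v + w) = a * mxform M u v + mxform M u w.
Proof. by move=> symM a u v w; rewrite !(mxform_sym symM u) mxform_linearl. Qed.

Lemma mxform_adjoint n (M A C : 'M[K]_n) : A^T *m M = M *m C ->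
  forall v w, mxform M (A *m v) w = mxform M v (C *m w).
Proof. by move=> E v w; rewrite /mxform trmx_mul -(mulmxA v^T) E !mulmxA. Qed.

Lemma mxform_mulmx n (M X : 'M[K]_n) v w :
  mxform (X^T *m M *m X) v w = mxform M (X *m v) (X *m w).
Proof. by rewrite /mxform trmx_mul !mulmxA. Qed.

Lemma mxform_delta n (M : 'M[K]_n) p q :
  mxform M (delta_mx p 0) (delta_mx q 0) = M p q.
Proof. by rewrite /mxform trmx_delta -rowE -colE !mxE. Qed.

Lemma anisotropic_mulmx n (M X : 'M[K]_n) :
  anisotropic M -> X \in unitmx -> anisotropic (X^T *m M *m X).
Proof.
move=> anisoM Xu v v0; rewrite mxform_mulmx; apply: anisoM.
by apply: contra v0 => /eqP Xv0; rewrite -(mulKmx Xu v) Xv0 mulmx0.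
Qed.

Lemma trmx_mul_conj n (M X Y : 'M[K]_n) :
  (X *m Y)^T *m M *m (X *m Y) = Y^T *m (X^T *m M *m X) *m Y.
Proof. by rewrite trmx_mul !mulmxA. Qed.

Lemma sym_block_mx n (M : 'M[K]_(1 + n)) : M^T = M ->
  exists a (u : 'rV_n) (D : 'M_n), M = block_mx a%:M u u^T D /\ D^T = D.
Proof.
move=> symM; have trM : block_mx (ulsubmx M)^T (dlsubmx M)^T (ursubmx M)^T (drsubmx M)^T = M.
  by rewrite -tr_block_mx submxK symM.
exists (ulsubmx M 0 0), (ursubmx M), (drsubmx M); split.
  rewrite -[LHS]submxK -mx11_scalar; congr block_mx.
  by rewrite -(congr1 ursubmx trM) block_mxKur trmxK.
by rewrite -{2}(congr1 drsubmx trM) block_mxKdr.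
Qed.

Lemma block_mx_pivot n a (u : 'rV[K]_n) (D : 'M[K]_n) : a != 0 ->
  let Q := block_mx 1%:M (- a^-1 *: u) 0 1%:M in
  Q^T *m block_mx a%:M u u^T D *m Q = block_mx a%:M 0 0 (D - a^-1 *: (u^T *m u)).
Proof.
move=> a0 Q; rewrite /Q tr_block_mx !mulmx_block !trmx0 !trmx1 !mul1mx !mul0mx !mulmx0.
have Z1 : a%:M *m (- a^-1 *: u) + u = 0.
  by rewrite mul_scalar_mx scalerA mulrN mulfV // scaleN1r addNr.
have Z2 : (- a^-1 *: u)^T *m a%:M + u^T = 0.
  by rewrite linearZ /= mul_mx_scalar scalerA mulrN mulfV // scaleN1r addNr.
by rewrite !addr0 !mulmx1 Z1 Z2 mul0mx add0r linearZ -scalemxAl scaleNr addrC.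
Qed.

(* Gram-Schmidt: the pivot [a = M 0 0] is nonzero by anisotropy, and the
   complementary block of the pivoted form is again symmetric and anisotropic. *)
Lemma anisotropic_diagonalization n (M : 'M[K]_n) : M^T = M -> anisotropic M ->
  exists2 Q : 'M[K]_n, Q \in unitmx & is_diag_mx (Q^T *m M *m Q).
Proof.
elim: n M => [|n IH] M symM anisoM.
  by exists 1%:M; rewrite ?unitmx1 //; apply/is_diag_mxP => -[].
move: M symM anisoM; rewrite -add1n => M /sym_block_mx[a [u [D [-> symD]]]] anisoM.
have a0 : a != 0.
  have := anisoM (col_mx 1%:M 0); rewrite col_mx_eq0 oner_eq0 /= => /(_ isT).
  rewrite /mxform tr_col_mx !trmx0 !trmx1 mul_row_block mul_row_col.
  by rewrite !mul0mx !mul1mx !addr0 mulmx0 addr0 mulmx1 mxE eqxx mulr1n.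
pose Q1 : 'M[K]_(1 + n) := block_mx 1%:M (- a^-1 *: u) 0 1%:M.
pose D' := D - a^-1 *: (u^T *m u).
have uQ1 : Q1 \in unitmx by rewrite unitmxE /Q1 det_ublock !det1 mulr1 unitr1.
have := anisotropic_mulmx anisoM uQ1; rewrite block_mx_pivot // -/D' => aniso1.
have anisoD' : anisotropic D'.
  move=> v v0; have := aniso1 (col_mx 0 v); rewrite col_mx_eq0 eqxx (negPf v0) => /(_ isT).
  by rewrite /mxform tr_col_mx trmx0 mul_row_block mul_row_col !mul0mx !mulmx0 !add0r.
have symD' : D'^T = D' by rewrite /D' linearB /= linearZ /= trmx_mul trmxK symD.
have [Q' uQ' diagQ'] := IH D' symD' anisoD'.
exists (Q1 *m block_mx 1%:M 0 0 Q').
  by rewrite unitmx_mul uQ1 unitmxE det_ublock det1 mul1r -unitmxE.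
rewrite trmx_mul_conj block_mx_pivot // -/D' tr_block_mx !trmx0 trmx1 !mulmx_block.
rewrite !mul0mx !mulmx0 !mul1mx !mulmx1 !addr0 !add0r mul0mx.
by rewrite is_diag_block_mx // !eqxx scalar_mx_is_diag.
Qed.

Lemma diag_adjoint_coef n (A C D : 'M[K]_n) : is_diag_mx D -> A^T *m D = D *m C ->
  forall i j, A j i * D j j = D i i * C i j.
Proof.
move=> /is_diag_mxP diagD /matrixP E i j; move: (E i j); rewrite !mxE.
rewrite (bigD1 j) //= big1 ?addr0 => [|k kj]; last by rewrite diagD ?mulr0.
rewrite (bigD1 i) //= big1 ?addr0 => [|k ki]; last by rewrite diagD ?mul0r // eq_sym.
by rewrite mxE.
Qed.

Lemma mxtrace_mul_delta n (A : 'M[K]_n) i j : \tr (A *m delta_mx j i) = A i j.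
Proof.
rewrite -(mul_delta_mx (0 : 'I_1)) mulmxA mxtrace_mulC mulmxA -rowE -colE.
by rewrite /mxtrace big_ord1 !mxE.
Qed.

End MatrixForms.

Section ValuedForms.
Variables (G : zmodType) (le : rel G) (K : fieldType) (nu : K -> option G).
Hypothesis hnu : surj_valuation le nu.

Lemma unit_diagonalization n (M : 'M[K]_n) : M^T = M ->
    (forall v, v != 0 -> exists g, nu (mxform M v v) = Some (g + g)) ->
  exists2 Q : 'M[K]_n, Q \in unitmx &
    is_diag_mx (Q^T *m M *m Q) /\ forall i, nu ((Q^T *m M *m Q) i i) = Some 0.
Proof.
move=> symM evenM.
have anisoM : anisotropic M.
  by move=> v /evenM[g Eg]; apply: contraPneq Eg => ->; rewrite (nu0 hnu).
have [Q uQ diagQ] := anisotropic_diagonalization symM anisoM.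
have col_neq0 i : Q *m delta_mx i (0 : 'I_1) != 0.
  apply/eqP => /(congr1 (mulmx (invmx Q))); rewrite mulKmx // mulmx0.
  by move/matrixP/(_ i 0)/eqP; rewrite !mxE !eqxx oner_eq0.
have /fin_all_exists[t tE] : forall i, exists x : K, exists g,
    nu x = Some (- g) /\ nu ((Q^T *m M *m Q) i i) = Some (g + g).
  move=> i; have [g Eg] := evenM _ (col_neq0 i).
  have [x Ex] := nu_surj hnu (- g).
  by exists x, g; rewrite -mxform_delta mxform_mulmx.
have rescaleE (X : 'M[K]_n) i j :
    (diag_mx (\row_k t k) *m X *m diag_mx (\row_k t k)) i j = t i * X i j * t j.
  by rewrite mul_mx_diag mxE mul_diag_mx !mxE.
exists (Q *m diag_mx (\row_k t k)).
  rewrite unitmx_mul uQ unitmxE det_diag unitfE; apply/prodf_neq0 => i _; rewrite mxE.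
  by have [g [Eg _]] := tE i; apply: contraPneq Eg => ->; rewrite (nu0 hnu).
rewrite trmx_mul_conj tr_diag_mx; split => [|i].
  move/is_diag_mxP: diagQ => diagQ.
  by apply/is_diag_mxP => i j ij; rewrite rescaleE diagQ // mulr0 mul0r.
have [g [Et ED]] := tE i.
by rewrite rescaleE !(nuM hnu) Et ED /= addrA addNr add0r subrr.
Qed.

End ValuedForms.

Section MatrixRepresentation.
Variables (K : fieldType) (H : falgType K) (n : nat) (s : H -> 'M[K]_n).
Hypothesis hs : is_mx_repr s.

Let s_linear : linear s. Proof. by case: hs. Qed.
#[local] HB.instance Definition _ := GRing.isLinear.Build K H 'M[K]_n *:%R s s_linear.

Lemma mx_repr0 : s 0 = 0. Proof. exact: linear0. Qed.

Lemma mx_repr1 : s 1 = 1%:M. Proof. by case: hs. Qed.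

Lemma mx_reprM x y : s (x * y) = s x *m s y. Proof. by case: hs. Qed.

Lemma mx_repr_entry_linear m (w : 'M[K]_(n, m)) i j :
  linear_for *%R (fun x => (s x *m w) i j).
Proof. by move=> a x y; rewrite /= linearP mulmxDl -scalemxAl !mxE. Qed.

Lemma mx_repr_conj (Q : 'M[K]_n) : Q \in unitmx ->
  is_mx_repr (fun h => invmx Q *m s h *m Q).
Proof.
move=> uQ; split=> [a x y||x y]; last by rewrite mx_reprM !mulmxA mulmxK.
  by rewrite linearP mulmxDr mulmxDl -scalemxAr -scalemxAl.
by rewrite mx_repr1 mulmx1 mulVmx.
Qed.

Variables (tau : H -> K) (star : H -> H) (B : seq H).
Hypotheses (htau : symmetrizing_form tau) (hstar : linear_involutive_antiaut star).
Hypothesis hB : star_symmetric_basis tau star B.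

Definition gram_mx := \sum_(b <- B) (s b)^T *m s b.

Lemma gram_mx_sym : gram_mx^T = gram_mx.
Proof. by rewrite /gram_mx linear_sum; apply: eq_bigr => b _; rewrite /= trmx_mul trmxK. Qed.

Lemma mxform_gram w : mxform gram_mx w w =
  \sum_(y <- [seq (s b *m w) k 0 | b <- B, k <- enum 'I_n]) y ^+ 2.
Proof.
rewrite big_allpairs_dep /mxform /gram_mx mulmx_sumr mulmx_suml summxE.
apply: eq_bigr => b _; rewrite mulmxA -trmx_mul -mulmxA mxE big_enum /=.
by apply: eq_bigr => k _; rewrite mxE expr2.
Qed.

Lemma mx_repr_coef_linear i j : linear_for *%R (fun x => s x i j).
Proof. by move=> a x y; rewrite /= linearP !mxE. Qed.

Lemma gram_mx_adjoint h : (s (star h))^T *m gram_mx = gram_mx *m s h.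
Proof.
rewrite /gram_mx mulmx_sumr mulmx_suml; apply/matrixP => p q; rewrite !summxE.
transitivity (\sum_k \sum_(b <- B) s (b * star h) k p * s b k q).
  rewrite exchange_big; apply: eq_bigr => b _.
  by rewrite mulmxA -trmx_mul -mx_reprM mxE; apply: eq_bigr => k _; rewrite mxE.
transitivity (\sum_k \sum_(b <- B) s b k p * s (b * h) k q).
  apply: eq_bigr => k _.
  exact: (sum_basis_mul_star htau hstar hB (mx_repr_coef_linear k p) (mx_repr_coef_linear k q)).
rewrite exchange_big; apply: eq_bigr => b _.
by rewrite -mulmxA -mx_reprM mxE; apply: eq_bigr => k _; rewrite mxE.
Qed.

End MatrixRepresentation.

Section GramForm.
Variables (G : zmodType) (le : rel G) (K : fieldType) (nu : K -> option G).
Hypotheses (hG : ordered_abelian_group le) (hnu : surj_valuation le nu).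
Hypothesis hF : residue_formally_real le nu.
Variables (H : falgType K) (n : nat) (s : H -> 'M[K]_n).
Variables (tau : H -> K) (star : H -> H) (B : seq H).
Hypotheses (hs : is_mx_repr s) (hB : star_symmetric_basis tau star B).

Lemma mxform_gram_eq0 w : mxform (gram_mx s B) w w = 0 -> w = 0.
Proof.
rewrite mxform_gram => /(sum_sqr_eq0 hG hnu hF) coef0.
apply/matrixP => k j; rewrite ord1 mxE.
rewrite -[w]mul1mx -(mx_repr1 hs); apply: (linear_form_eq0 hB (mx_repr_entry_linear hs w k 0)).
by move=> b bB; apply: coef0; apply/allpairsPdep; exists b, k; rewrite mem_enum.
Qed.

Lemma mxform_gram_even w : w != 0 -> exists g, nu (mxform (gram_mx s B) w w) = Some (g + g).
Proof.
move=> w0; have nz : mxform (gram_mx s B) w w != 0.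
  by apply: contra w0 => /eqP/mxform_gram_eq0->.
by rewrite mxform_gram in nz *; have [g [Eg _]] := nu_sum_sqr hG hnu hF nz; exists g.
Qed.

End GramForm.

Section Balanced.
Variables (G : zmodType) (le : rel G) (K : fieldType) (nu : K -> option G).
Variables (H : falgType K) (Lambda : finType) (d : Lambda -> nat).
Variables (rho : forall l : Lambda, H -> 'M[K]_(d l)) (tau : H -> K) (c : Lambda -> K).
Variable star : H -> H.
Hypotheses (hG : ordered_abelian_group le) (hnu : surj_valuation le nu).
Hypothesis hF : residue_formally_real le nu.
Hypotheses (hss : split_semisimple_data rho) (htau : symmetrizing_form tau).
Hypothesis hchi : forall h : H, tau h = \sum_(l : Lambda) (c l)^-1 * chi rho l h.
Hypothesis hstar : linear_involutive_antiaut star.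
Variable l : Lambda.

Definition mx_in_block (X : 'M[K]_(d l)) (m : Lambda) : 'M[K]_(d m) :=
  if m =P l is ReflectT e then castmx (congr1 d (esym e), congr1 d (esym e)) X else 0.

Lemma mx_in_block_id X : mx_in_block X l = X.
Proof. by rewrite /mx_in_block; case: eqP => [e|/(_ erefl)//]; apply: castmx_id. Qed.

Lemma mx_in_block_neq X m : m != l -> mx_in_block X m = 0.
Proof. by rewrite /mx_in_block; case: eqP. Qed.

Let dl_gt0 : (0 < d l)%N. Proof. by case: hss. Qed.

Section EquivalentRepresentation.
Variables (s : H -> 'M[K]_(d l)) (P : 'M[K]_(d l)).
Hypotheses (hs : is_mx_repr s) (Pu : P \in unitmx).
Hypothesis hP : forall h, P *m s h = rho l h *m P.

Lemma block_preimage X :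
  exists e, s e = X /\ forall y, tau (y * e) = (c l)^-1 * \tr (s y *m X).
Proof.
have sE h : s h = invmx P *m rho l h *m P by rewrite -mulmxA -hP mulKmx.
case: hss => _ reps _ surj; have [e He] := surj (mx_in_block (P *m X *m invmx P)).
exists e; split; first by rewrite sE He mx_in_block_id !mulmxA mulVmx // mul1mx mulmxKV.
move=> y; rewrite hchi (bigD1 l) //= big1 ?addr0 => [|m ml].
  by rewrite /chi mx_reprM // He mx_in_block_id !mulmxA mxtrace_mulC !mulmxA -sE.
by rewrite /chi mx_reprM // He mx_in_block_neq // mulmx0 mxtrace0 mulr0.
Qed.

Lemma schur_neq0 : c l != 0.
Proof.
have [e [Ee He]] := block_preimage 1%:M; apply/eqP => c0.
have e0 : e = 0 by case: htau => _ _; apply=> y; rewrite (tauC htau) He c0 invr0 mul0r.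
move/matrixP: Ee => /(_ (Ordinal dl_gt0) (Ordinal dl_gt0)) /eqP.
by rewrite e0 mx_repr0 // !mxE eqxx eq_sym oner_eq0.
Qed.

Lemma schur_orthogonality B : star_symmetric_basis tau star B ->
  forall i j, \sum_(b <- B) s b i j * s (star b) j i = c l.
Proof.
move=> hB i j; have [e [Ee He]] := block_preimage (delta_mx j i).
have := sum_basis_dual htau hstar hB (mx_repr_coef_linear hs j i) e.
rewrite Ee mxE !eqxx mulr1n => dualE; rewrite -[RHS]mulr1 -dualE mulr_sumr.
apply: eq_bigr => b _; rewrite He mxtrace_mul_delta.
by rewrite !mulrA (mulfV schur_neq0) mul1r.
Qed.

Lemma sum_sqr_repr_coef B D : star_symmetric_basis tau star B ->
    is_diag_mx D -> (forall i, D i i != 0) ->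
    (forall h, (s (star h))^T *m D = D *m s h) ->
  forall i j, \sum_(b <- B) s b i j ^+ 2 = c l * D j j / D i i.
Proof.
move=> hB diagD D0 sD i j; rewrite -(schur_orthogonality hB i j) !mulr_suml.
apply: eq_bigr => b _; rewrite -(mulrA (s b i j)) (diag_adjoint_coef diagD (sD b)).
by rewrite mulrCA [D i i * _]mulrC mulfK // expr2.
Qed.

End EquivalentRepresentation.

Variables (s : H -> 'M[K]_(d l)) (P : 'M[K]_(d l)) (B : seq H).
Hypotheses (hs : is_mx_repr s) (Pu : P \in unitmx).
Hypothesis hP : forall h, P *m s h = rho l h *m P.
Hypothesis hB : star_symmetric_basis tau star B.

Lemma balanced_repr_exists : exists a : G, nu (c l) = Some (- (a + a)) /\
  exists rho' : H -> 'M[K]_(d l),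
    [/\ is_mx_repr rho', mx_repr_equiv rho' (rho l) & balanced le nu tau star rho' a].
Proof.
have [Q Qu [diagD nuD]] := unit_diagonalization hnu (gram_mx_sym s B) (mxform_gram_even hG hnu hF hs hB).
set D := Q^T *m gram_mx s B *m Q in diagD nuD.
pose r h := invmx Q *m s h *m Q.
have hr : is_mx_repr r := mx_repr_conj hs Qu.
have rP h : (P *m Q) *m r h = rho l h *m (P *m Q) by rewrite /r !mulmxA mulmxK // hP.
have rD h : (r (star h))^T *m D = D *m r h.
  rewrite /r /D !trmx_mul trmx_inv !mulmxA mulmxKV ?unitmx_tr //.
  by rewrite -(mulmxA _ (s (star h))^T) (gram_mx_adjoint hs htau hstar hB) !mulmxA mulmxK.
have PQu : P *m Q \in unitmx by rewrite unitmx_mul Pu.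
have D0 i : D i i != 0 by apply: contraPneq (nuD i) => ->; rewrite (nu0 hnu).
have sqrE B' (hB' : star_symmetric_basis tau star B') i j :
    \sum_(y <- [seq r b i j | b <- B']) y ^+ 2 = c l * D j j / D i i.
  by rewrite big_map (sum_sqr_repr_coef hr PQu rP hB' diagD D0 rD).
have sqr_neq0 B' (hB' : star_symmetric_basis tau star B') i j :
    \sum_(y <- [seq r b i j | b <- B']) y ^+ 2 != 0.
  by rewrite sqrE // !mulf_neq0 ?invr_eq0 // (schur_neq0 hs Pu hP).
pose i0 := Ordinal dl_gt0.
have [g [Eg _]] := nu_sum_sqr hG hnu hF (sqr_neq0 B hB i0 i0).
rewrite sqrE // mulfK // in Eg.
exists (- g); split; first by rewrite -opprD opprK.
exists r; split => //; first by exists (P *m Q).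
move=> B' hB' b bB' i j.
have [g' [Eg' geg']] := nu_sum_sqr hG hnu hF (sqr_neq0 B' hB' i j).
have <- : g' = g.
  move: Eg'; rewrite sqrE // !(nuM hnu) Eg (nuV hnu (nuD i)) nuD /=.
  by rewrite oppr0 !addr0 => -[/(double_inj hG)].
by rewrite opprK; apply: geg'; apply: map_f.
Qed.

End Balanced.

Theorem mainTheorem5
    (G : zmodType) (le : rel G) (K : fieldType) (nu : K -> option G)
    (H : falgType K) (Lambda : finType) (d : Lambda -> nat)
    (rho : forall l : Lambda, H -> 'M[K]_(d l))
    (tau : H -> K) (c : Lambda -> K) (star : H -> H) :
  ordered_abelian_group le ->
  surj_valuation le nu ->
  residue_formally_real le nu ->
  split_semisimple_data rho ->
  symmetrizing_form tau ->
  (forall h : H, tau h = \sum_(l : Lambda) (c l)^-1 * chi rho l h) ->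
  linear_involutive_antiaut star ->
  (exists B : seq H, star_symmetric_basis tau star B) ->
  forall (l : Lambda) (rhoV : H -> 'M[K]_(d l)),
    is_mx_repr rhoV -> mx_repr_equiv rhoV (rho l) ->
    (exists f : 'cV[K]_(d l) -> 'cV[K]_(d l) -> K,
       [/\ (forall (a : K) (u v w : 'cV[K]_(d l)), f (a *: u + v) w = a * f u w + f v w) /\
            (forall (a : K) (u v w : 'cV[K]_(d l)), f u (a *: v + w) = a * f u v + f u w),
           forall v w, f v w = f w v,
           forall (h : H) (v w : 'cV[K]_(d l)), f (rhoV (star h) *m v) w = f v (rhoV h *m w),
           (forall w, sum_of_squares (f w w)) /\ (forall w, f w w = 0 -> w = 0)
         & forall w, w != 0 -> exists g : G, nu (f w w) = Some (g + g)])
    /\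
    (exists a : G,
       nu (c l) = Some (- (a + a)) /\
       exists rho' : H -> 'M[K]_(d l),
         [/\ is_mx_repr rho', mx_repr_equiv rho' (rho l)
           & balanced le nu tau star rho' a]).
Proof.
move=> hG hnu hF hss htau hchi hstar [B hB] l rhoV hV [P Pu hP].
split; last exact: (balanced_repr_exists hG hnu hF hss htau hchi hstar hV Pu hP hB).
have symM := gram_mx_sym rhoV B.
exists (mxform (gram_mx rhoV B)); split.
- by split=> *; rewrite (mxform_linearl, mxform_linearr symM).
- exact: mxform_sym.
- by move=> h v w; apply: mxform_adjoint; apply: (gram_mx_adjoint hV htau hstar hB).
- split=> [w|]; last exact: (mxform_gram_eq0 hG hnu hF hV hB).
  by rewrite mxform_gram; eexists.
- exact: (mxform_gram_even hG hnu hF hV hB).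
Qed.
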